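(* Let $\Delta$ be a simplicial complex on $[n]$ with $I_\Delta\neq 0$, let $k$ be the initial degree of $I_\Delta$, and let $d=(d_1,\dots,d_n)$ with $d_i\ge 2$ for $1\le i\le n$. Then the initial degree of $I_{M(\Delta,d)}$ is $2^{k-1}$.
   Context: A simplicial complex on $[n]$ is a nonempty family of subsets of $[n]$ closed under subsets (not every singleton need be a face); facets are inclusion-maximal faces. $I_\Delta=(\prod_{i\in\sigma}x_i:\sigma\subseteq[n],\sigma\notin\Delta)\subset K[x_1,\dots,x_n]$ is the Stanley–Reisner ideal. The initial degree of a nonzero homogeneous ideal is the smallest degree of a minimal generator. Hierarchical model: $M(\Delta,d)$ is the $0/1$ matrix with columns indexed by cells $c\in\mathcal C=[d_1]\times\cdots\times[d_n]$ and rows indexed by pairs $(F,a)$, $F$ a facet, $a\in\prod_{i\in F}[d_i]$, entry $1$ iff $c|_F=a$. Its toric ideal $I_{M(\Delta,d)}\subset K[p_c:c\in\mathcal C]$ is generated by binomials $p^u-p^v$, $u,v\in\mathbb N^{\mathcal C}$, $Mu=Mv$, and is homogeneous. *)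

From HB Require Import structures.
From mathcomp Require Import all_boot all_algebra.
From mathcomp Require Import mpoly.
Set Implicit Arguments. Unset Strict Implicit. Unset Printing Implicit Defensive.
Import GRing.Theory.
Local Open Scope ring_scope.

Definition ideal_gen (R : comNzRingType) (m : nat)
  (G : {mpoly R[m]} -> Prop) (p : {mpoly R[m]}) : Prop :=
  exists s : seq ({mpoly R[m]} * {mpoly R[m]}),
    (forall x, x \in s -> G x.2) /\ p = \sum_(x <- s) x.1 * x.2.

Definition ideal_nonzero (R : comNzRingType) (m : nat) (I : {mpoly R[m]} -> Prop) :=
  exists p, I p /\ p != 0.

(* Initial degree of a nonzero homogeneous ideal I: the least k such that I
   contains a nonzero homogeneous (total-degree) element of degree k
   (= smallest degree of a minimal homogeneous generator). *)
Definition initial_degree (R : comNzRingType) (m : nat)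
  (I : {mpoly R[m]} -> Prop) (k : nat) : Prop :=
  (exists p, [/\ I p, p != 0 & p \is k.-homog]) /\
  (forall p j, I p -> p != 0 -> p \is j.-homog -> (k <= j)%N).

Definition simplicial_complex (n : nat) (Delta : {set {set 'I_n}}) : Prop :=
  Delta != set0 /\ forall s t : {set 'I_n}, s \in Delta -> t \subset s -> t \in Delta.

Definition facet (n : nat) (Delta : {set {set 'I_n}}) (F : {set 'I_n}) : Prop :=
  F \in Delta /\ forall G, G \in Delta -> F \subset G -> G = F.

Definition SR_gen (K : comNzRingType) (n : nat) (Delta : {set {set 'I_n}})
  (f : {mpoly K[n]}) : Prop :=
  exists sigma : {set 'I_n}, sigma \notin Delta /\ f = \prod_(i in sigma) 'X_i.

Definition SR_ideal (K : comNzRingType) (n : nat) (Delta : {set {set 'I_n}}) :=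
  ideal_gen (@SR_gen K n Delta).

Definition cell (n : nat) (d : 'I_n -> nat) := {dffun forall i : 'I_n, 'I_(d i)}.

Definition pvar (K : comNzRingType) (n : nat) (d : 'I_n -> nat) (c : cell d)
  : {mpoly K[#|{: cell d}|]} := 'X_(enum_rank c).

Definition pmonom (K : comNzRingType) (n : nat) (d : 'I_n -> nat)
  (u : {ffun cell d -> nat}) : {mpoly K[#|{: cell d}|]} :=
  \prod_(c : cell d) @pvar K n d c ^+ u c.

(* Row (F, a) of M(Delta,d), where a in prod_{i in F} [d_i] is represented as the
   restriction to F of a cell a0 (every such a arises this way); the entry in
   column c is 1 iff c|_F = a. (M u)_(F,a) is the sum of u over those cells. *)
Definition agree_on (n : nat) (d : 'I_n -> nat) (F : {set 'I_n}) (c a0 : cell d) : bool :=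
  [forall i : 'I_n, (i \in F) ==> (c i == a0 i)].

Definition Mmul (n : nat) (d : 'I_n -> nat) (F : {set 'I_n}) (a0 : cell d)
  (u : {ffun cell d -> nat}) : nat :=
  (\sum_(c : cell d | agree_on F c a0) u c)%N.

Definition same_fiber (n : nat) (Delta : {set {set 'I_n}}) (d : 'I_n -> nat)
  (u v : {ffun cell d -> nat}) : Prop :=
  forall F, facet Delta F -> forall a0 : cell d, Mmul F a0 u = Mmul F a0 v.

Definition toric_gen (K : comNzRingType) (n : nat) (Delta : {set {set 'I_n}})
  (d : 'I_n -> nat) (f : {mpoly K[#|{: cell d}|]}) : Prop :=
  exists u v : {ffun cell d -> nat},
    same_fiber Delta u v /\ f = @pmonom K n d u - @pmonom K n d v.

Definition toric_ideal (K : comNzRingType) (n : nat) (Delta : {set {set 'I_n}})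
  (d : 'I_n -> nat) := ideal_gen (@toric_gen K n Delta d).

From HB Require Import structures.
From mathcomp Require Import all_boot all_algebra.
From mathcomp Require Import mpoly.
From mathcomp Require Import zify.
Set Implicit Arguments. Unset Strict Implicit. Unset Printing Implicit Defensive.
Import GRing.Theory.

(* Let [k] be the least size of a nonface of [Delta], so that every set of at
   most [k - 1] coordinates lies in a facet.  If [p^u - p^v] is a nonzero
   binomial of the toric ideal, the tables [u] and [v] therefore have equal
   marginals on all sets of at most [k - 1] coordinates; slicing along one
   coordinate at a time, such distinct tables have total mass at least
   [2 ^ (k - 1)].  Conversely, for a nonface [sigma] of size [k], let [u] and
   [v] be the indicators of the even and odd vertices of the cube [{0,1}^sigma]
   (padded with zeros).  Every facet misses some [j] in [sigma], and flipping
   coordinate [j] exchanges [u] and [v] while fixing the marginals on the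
   facet, so [p^u - p^v] is a binomial of degree [2 ^ (k - 1)] in the ideal. *)
Section Marginals.
Variables (C I : finType) (coord : C -> I -> nat).
Implicit Types (S J : {set I}) (f : I -> nat) (u v : C -> nat).

Definition has_coords S f (c : C) : bool := [forall j in S, coord c j == f j].

Definition marginal S f u : nat := \sum_(c | has_coords S f c) u c.

Definition same_marginals J t u v :=
  forall S, S \subset J -> #|S| <= t -> forall f, marginal S f u = marginal S f v.

Definition coords_separate J u v :=
  forall c c', 0 < u c + v c -> 0 < u c' + v c' ->
    (forall j, j \in J -> coord c j = coord c' j) -> c = c'.

Lemma marginal_set0 f u : marginal set0 f u = \sum_c u c.
Proof. by apply: eq_bigl => c; apply/forallP => j; rewrite inE. Qed.

Lemma same_marginals_sum J t u v : same_marginals J t u v -> \sum_c u c = \sum_c v c.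
Proof. by move=> Euv; rewrite -!(marginal_set0 (fun=> 0)) Euv ?sub0set ?cards0. Qed.

Lemma same_marginals_sub J J' t u v :
  J' \subset J -> same_marginals J t u v -> same_marginals J' t u v.
Proof. by move=> sJ Euv S SJ'; apply: Euv (subset_trans SJ' sJ). Qed.

Lemma sum_gt0_of_neq u v : ~ u =1 v -> \sum_c u c = \sum_c v c -> 0 < \sum_c u c.
Proof.
move=> neq Esum; rewrite lt0n; apply: contra_notN neq => /eqP u0 c.
have sum0 w : \sum_c w c = 0 -> w c = 0.
  by move/eqP; rewrite sum_nat_eq0 => /forall_inP /(_ c isT) /eqP.
by rewrite (sum0 u u0) (sum0 v) // -Esum.
Qed.

Lemma eq_of_separate0 u v :
  coords_separate set0 u v -> \sum_c u c = \sum_c v c -> u =1 v.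
Proof.
move=> sep Esum c; have [uv0|uv_gt0] := posnP (u c + v c).
  by move/eqP: uv0; rewrite addn_eq0 => /andP[/eqP-> /eqP->].
have off0 c' : c' != c -> u c' + v c' = 0.
  move=> c'c; apply/eqP; rewrite -leqn0 leqNgt; apply: contra_neqN c'c => pos.
  by apply: sep pos uv_gt0 _ => j; rewrite inE.
move: Esum; rewrite (bigD1 c) //= [in RHS](bigD1 c) //=.
by rewrite !big1 ?addn0 // => c' /off0; lia.
Qed.

Definition slice (i : I) (a : nat) u (c : C) : nat := if coord c i == a then u c else 0.

Lemma has_coords_setU1 i a S f c : i \notin S ->
  has_coords (i |: S) (fun j => if j == i then a else f j) c =
  (coord c i == a) && has_coords S f c.
Proof.
move=> iS; apply/forall_inP/andP => [H|[/eqP ci /forall_inP H] j].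
  split; first by have := H i (setU11 i S); rewrite eqxx.
  apply/forall_inP => j jS; have := H j (setU1r i jS).
  by case: (eqVneq j i) => // ji; move: iS; rewrite -ji jS.
by rewrite in_setU1; case: eqVneq => [-> _|_ /H] //; rewrite ci.
Qed.

Lemma marginal_slice i a S f u : i \notin S ->
  marginal S f (slice i a u) = marginal (i |: S) (fun j => if j == i then a else f j) u.
Proof.
move=> iS; rewrite /marginal /slice big_mkcond [RHS]big_mkcond.
by apply: eq_bigr => c _; rewrite has_coords_setU1 //; case: (_ == a); case: has_coords.
Qed.

Lemma sum_slice_le i a u : \sum_c slice i a u c <= \sum_c u c.
Proof. by apply: leq_sum => c _; rewrite /slice; case: ifP. Qed.

Lemma sum_slice2_le i a b u : a != b ->
  \sum_c slice i a u c + \sum_c slice i b u c <= \sum_c u c.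
Proof.
move=> ab; rewrite -big_split; apply: leq_sum => c _; rewrite /slice.
by case: eqP => [->|_] /=; [rewrite (negbTE ab) addn0 | case: ifP].
Qed.

Lemma coords_separate_slice J i a u v :
  coords_separate J u v -> coords_separate (J :\ i) (slice i a u) (slice i a v).
Proof.
rewrite /slice => sep c c'.
case: eqP => [ci|]; last by rewrite addn0.
case: eqP => [ci'|]; last by rewrite addn0.
move=> uv_gt0 uv_gt0' agree; apply: sep uv_gt0 uv_gt0' _ => j jJ.
by case: (eqVneq j i) => [->|ji]; [rewrite ci ci' | apply: agree; rewrite in_setD1 ji].
Qed.

Lemma same_marginals_slice J t i a u v : i \in J ->
  same_marginals J t.+1 u v -> same_marginals (J :\ i) t (slice i a u) (slice i a v).
Proof.
move=> iJ Euv S SJ cS f.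
have iS : i \notin S by apply: contraTN iJ => /(subsetP SJ); rewrite setD11.
rewrite !marginal_slice //; apply: Euv; last by rewrite cardsU1 iS.
by rewrite subUset sub1set iJ (subset_trans SJ (subD1set J i)).
Qed.

Lemma same_marginals_slice_support J t i a u v :
  (forall c, coord c i != a -> u c = v c) ->
  same_marginals J t u v -> same_marginals J t (slice i a u) (slice i a v).
Proof.
move=> off_eq Euv S SJ cS f; have := Euv S SJ cS f.
have split_off w : marginal S f w = marginal S f (slice i a w) +
    \sum_(c | has_coords S f c && (coord c i != a)) w c.
  rewrite /marginal (bigID (fun c => coord c i == a)) /=; congr (_ + _).
  by rewrite big_mkcondr; apply: eq_bigr => c _; rewrite /slice; case: ifP.
rewrite (split_off u) (split_off v) (eq_bigr v) => [|c /andP[_]].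
  exact: addIn.
exact: off_eq.
Qed.

Lemma slice_neq i u v c : u c != v c ->
  ~ slice i (coord c i) u =1 slice i (coord c i) v.
Proof. by move=> ne /(_ c); rewrite /slice eqxx; apply/eqP. Qed.

Lemma exists_neq u v : ~ u =1 v -> exists c, u c != v c.
Proof.
move=> neq; apply/existsP; apply: contra_notT neq => /existsPn eq_uv c.
by apply/eqP/negPn; exact: eq_uv.
Qed.

(* Induction on the number of coordinates: either [u - v] lives on two
   distinct [i]-slices, each contributing [2 ^ t] (with one fewer marginal
   degree), or on a single one, which then carries all of [2 ^ t.+1]. *)
Lemma same_marginals_sum_ge J t u v : coords_separate J u v -> ~ u =1 v ->
  same_marginals J t u v -> 2 ^ t <= \sum_c u c.
Proof.
elim: {J}_.+1 {-2}J (ltnSn #|J|) t u v => // m IH J cardJ t u v sep neq Euv.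
have Esum := same_marginals_sum Euv.
have [J0|[i iJ]] := set_0Vmem J.
  by case: neq; apply: eq_of_separate0 Esum; rewrite -J0.
case: t Euv => [|t] Euv; first exact: sum_gt0_of_neq neq Esum.
have cardJi : #|J :\ i| < m by rewrite (cardsD1 i J) iJ in cardJ.
have [c0 ne0] := exists_neq neq.
case: (boolP [exists c, (coord c i != coord c0 i) && (u c != v c)]).
  case/existsP => c /andP[ci ne].
  have slice_ge c' : u c' != v c' -> 2 ^ t <= \sum_c'' slice i (coord c' i) u c''.
    move=> ne'; apply: IH _ cardJi _ _ _ (coords_separate_slice sep) (slice_neq ne') _.
    exact: same_marginals_slice.
  rewrite expnS mul2n -addnn; apply: leq_trans (sum_slice2_le _ _ ci).
  exact: leq_add (slice_ge c ne) (slice_ge c0 ne0).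
move/existsPn => one_slice.
have off_eq c : coord c i != coord c0 i -> u c = v c.
  by move=> ci; apply/eqP; have := one_slice c; rewrite ci negbK.
apply: leq_trans (sum_slice_le i (coord c0 i) u).
apply: IH _ cardJi _ _ _ (coords_separate_slice sep) (slice_neq ne0) _.
exact: same_marginals_sub (subD1set J i) (same_marginals_slice_support off_eq Euv).
Qed.

End Marginals.

Section FacetMarginals.
Variables (n : nat) (d : 'I_n -> nat).
Implicit Types (F S : {set 'I_n}) (b c r : cell d) (f : 'I_n -> nat).

Definition cell_coord c (i : 'I_n) : nat := c i.

Definition pad F b c : cell d := [ffun i => if i \in F then c i else b i].

Lemma agree_on_pad F b c c' : agree_on F c c' = (pad F b c == pad F b c').
Proof.
apply/forallP/eqP => [agree | Epad i].
  by apply/ffunP => i; rewrite !ffunE; case: ifP => // /(implyP (agree i)) /eqP.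
by apply/implyP => iF; move/ffunP/(_ i): Epad; rewrite !ffunE iF => ->.
Qed.

Lemma pad_id F b c : pad F b (pad F b c) = pad F b c.
Proof. by apply/ffunP => i; rewrite !ffunE; case: ifP => // ->. Qed.

Lemma has_coords_agree F S f c c' : S \subset F -> agree_on F c c' ->
  has_coords cell_coord S f c = has_coords cell_coord S f c'.
Proof.
move=> SF /forallP agree; apply: eq_forallb_in => j /(subsetP SF) jF.
by rewrite /cell_coord (eqP (implyP (agree j) jF)).
Qed.

Lemma marginal_by_facet F S f b (w : {ffun cell d -> nat}) : S \subset F ->
  marginal cell_coord S f w =
  \sum_(r | has_coords cell_coord S f r && (pad F b r == r)) Mmul F r w.
Proof.
move=> SF; rewrite /marginal (partition_big (pad F b)
  (fun r => has_coords cell_coord S f r && (pad F b r == r))) => [|c Sc].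
  apply: eq_bigr => r /andP[Sr /eqP padr]; apply: eq_bigl => c.
  rewrite (agree_on_pad F b) padr andb_idl // => /eqP padc.
  by rewrite (@has_coords_agree F S f c r SF) // (agree_on_pad F b) padc padr.
rewrite pad_id eqxx andbT (@has_coords_agree F S f _ c SF) //.
by rewrite (agree_on_pad F b) pad_id.
Qed.

Lemma marginal_eq_of_Mmul F S f (u v : {ffun cell d -> nat}) : S \subset F ->
  (forall a0, Mmul F a0 u = Mmul F a0 v) ->
  marginal cell_coord S f u = marginal cell_coord S f v.
Proof.
move=> SF Euv; have [b _|no_cell] := pickP (@predT (cell d)).
  by rewrite !(marginal_by_facet f b _ SF); apply: eq_bigr.
by rewrite /marginal !big_pred0 // => c; have := no_cell c.
Qed.

End FacetMarginals.

Lemma facet_exists n (Delta : {set {set 'I_n}}) T :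
  T \in Delta -> exists2 F, facet Delta F & T \subset F.
Proof.
move=> TD; have TT : (T \in Delta) && (T \subset T) by rewrite TD subxx.
have [F /andP[FD TF] Fmax] :=
  @arg_maxnP _ T (fun G => (G \in Delta) && (T \subset G)) (fun G => #|G|) TT.
exists F => //; split=> // G GD FG; apply/eqP; rewrite eq_sym eqEcard FG.
by apply: Fmax; rewrite GD (subset_trans TF FG).
Qed.

Lemma same_fiber_sum_ge n (Delta : {set {set 'I_n}}) (d : 'I_n -> nat) t
    (u v : {ffun cell d -> nat}) :
  (forall T : {set 'I_n}, #|T| <= t -> T \in Delta) ->
  same_fiber Delta u v -> u != v -> 2 ^ t <= \sum_c u c.
Proof.
move=> small_faces fib neq.
apply: (@same_marginals_sum_ge _ _ (@cell_coord n d) setT).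
- move=> c c' _ _ agree; apply/ffunP => i; apply/val_inj; exact: agree i (in_setT i).
- by move=> E; move/eqP: neq; apply; apply/ffunP.
- move=> S _ cardS f; have [F facetF SF] := facet_exists (small_faces S cardS).
  exact: marginal_eq_of_Mmul SF (fib F facetF).
Qed.

Section ParityCube.
Variables (n : nat) (d : 'I_n -> nat) (d_ge2 : forall i, 1 < d i) (sigma : {set 'I_n}).
Implicit Types (c : cell d) (b : bool).

Lemma bit_lt_d i b : b < d i.
Proof. by case: b; apply: leq_trans (d_ge2 i). Qed.

Lemma flip_lt_d i x : 1 - x < d i.
Proof. by apply: leq_ltn_trans (d_ge2 i); rewrite leq_subr. Qed.

Definition bit_cell (T : {set 'I_n}) : cell d := [ffun i => Ordinal (bit_lt_d i (i \in T))].

Definition in_cube c : bool := [forall i, c i <= (i \in sigma)].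

Definition parity_cube b : {ffun cell d -> nat} :=
  [ffun c => nat_of_bool (in_cube c && (odd (\sum_(i in sigma) c i) == b))].

(* Values outside [{0,1}] are left alone, so that [flip j] is an involution
   of all cells. *)
Definition flip (j : 'I_n) c : cell d :=
  [ffun i => if (i == j) && (c i <= 1) then Ordinal (flip_lt_d i (c i)) else c i].

Lemma flipE j c i : flip j c i = (if (i == j) && (c i <= 1) then 1 - c i else c i) :> nat.
Proof. by rewrite ffunE; case: ifP. Qed.

Lemma flipK j : involutive (flip j).
Proof.
move=> c; apply/ffunP => i; apply/val_inj; rewrite /= !flipE.
case: (eqVneq i j) => //= ->; case: (leqP (c j) 1) => cj; first by rewrite leq_subr subKn.
by rewrite leqNgt cj.
Qed.

Lemma in_cube_flip j c : j \in sigma -> in_cube (flip j c) = in_cube c.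
Proof.
move=> js; apply: eq_forallb => i; rewrite flipE.
case: (eqVneq i j) => //= ->; rewrite js /=.
by case: (leqP (c j) 1) => cj; rewrite ?leq_subr // leqNgt cj.
Qed.

Lemma odd_sum_flip j c : j \in sigma -> c j <= 1 ->
  odd (\sum_(i in sigma) flip j c i) = ~~ odd (\sum_(i in sigma) c i).
Proof.
move=> js cj; rewrite !(bigD1 j js) /= !oddD flipE eqxx cj.
rewrite (eq_bigr (fun i => c i : nat)) => [|i /andP[_ ij]]; last by rewrite flipE (negbTE ij).
by case: (nat_of_ord (c j)) cj => [|[]] // _ /=; rewrite negbK.
Qed.

Lemma parity_cube_flip j b c : j \in sigma ->
  parity_cube b (flip j c) = parity_cube (~~ b) c.
Proof.
move=> js; rewrite !ffunE in_cube_flip //; case cube: (in_cube c) => //=.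
have cj : c j <= 1 by have := forallP cube j; rewrite js.
by rewrite odd_sum_flip //; case: b; case: odd.
Qed.

Lemma agree_on_flip (F : {set 'I_n}) j c a0 :
  j \notin F -> agree_on F (flip j c) a0 = agree_on F c a0.
Proof.
move=> jF; apply: eq_forallb => i; case: (boolP (i \in F)) => //= iF.
have ij : i != j by apply: contraNneq jF => <-.
by rewrite -!val_eqE /= flipE (negbTE ij).
Qed.

(* Flipping a coordinate of [sigma] outside [F] exchanges the two halves of
   the cube and preserves the [F]-marginals. *)
Lemma Mmul_parity_cube (F : {set 'I_n}) j a0 b : j \in sigma -> j \notin F ->
  Mmul F a0 (parity_cube b) = Mmul F a0 (parity_cube (~~ b)).
Proof.
move=> js jF; rewrite /Mmul (reindex_inj (inv_inj (flipK j))) /=.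
by apply: eq_big => [c|c _]; [exact: agree_on_flip | exact: parity_cube_flip].
Qed.

Lemma bit_cell_inj : injective bit_cell.
Proof.
move=> T T' /ffunP E; apply/setP => i; have := E i; rewrite !ffunE => /(congr1 val) /=.
by do 2!case: (i \in _).
Qed.

Lemma cube_image : [set c | in_cube c] = bit_cell @: powerset sigma.
Proof.
apply/setP => c; rewrite inE; apply/idP/imsetP => [cube | [T]]; last first.
  rewrite powersetE => /subsetP Ts ->; apply/forallP => i; rewrite ffunE /=.
  by case: (boolP (i \in T)) => // /Ts ->.
exists [set i | c i == 1 :> nat].
  rewrite powersetE; apply/subsetP => i; rewrite inE => /eqP ci.
  by have := forallP cube i; rewrite ci; case: (i \in sigma).
apply/ffunP => i; apply/val_inj; rewrite ffunE inE /=.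
by have := forallP cube i; case: (nat_of_ord (c i)) => [|[|]] //; case: (_ \in _).
Qed.

Lemma sum_parity_cube b : sigma != set0 ->
  \sum_c parity_cube b c = 2 ^ (#|sigma| - 1).
Proof.
case/set0Pn => j js.
have Mmul0 w : Mmul set0 (bit_cell set0) w = \sum_c w c.
  by apply: eq_bigl => c; apply/forallP => i; rewrite inE.
have halves b' : \sum_c parity_cube b' c = \sum_c parity_cube (~~ b') c.
  by rewrite -!Mmul0 (Mmul_parity_cube _ _ js) ?inE.
have whole : \sum_c parity_cube b c + \sum_c parity_cube (~~ b) c = 2 ^ #|sigma|.
  rewrite -card_powerset -(card_imset _ bit_cell_inj) -cube_image -big_split /=.
  rewrite -sum1_card [RHS]big_mkcond; apply: eq_bigr => c _.
  by rewrite !ffunE inE; case: in_cube; case: b; case: odd.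
have card_pos : 0 < #|sigma| by rewrite card_gt0; apply/set0Pn; exists j.
move: whole; rewrite -halves addnn -mul2n; case: #|sigma| card_pos => // s _.
by rewrite expnS subSS subn0 => /eqP; rewrite eqn_pmul2l // => /eqP.
Qed.

Lemma parity_cube_bit_cell0 b : parity_cube b (bit_cell set0) = ~~ b.
Proof.
rewrite ffunE big1 => [|i _]; last by rewrite ffunE inE.
have -> : in_cube (bit_cell set0) by apply/forallP => i; rewrite ffunE inE.
by case: b.
Qed.

End ParityCube.

Lemma ideal_gen_mem (R : comNzRingType) m (G : {mpoly R[m]} -> Prop) g :
  G g -> ideal_gen G g.
Proof.
move=> Gg; exists [:: (1%R, g)]; rewrite big_seq1 mul1r.
by split=> // x /[1!inE] /eqP ->.
Qed.

Lemma ideal_gen_homog_ge (R : comNzRingType) m (G : {mpoly R[m]} -> Prop) D j p :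
  (forall g, G g -> forall mm, mm \in msupp g -> D <= mdeg mm) ->
  ideal_gen G p -> p != 0%R -> p \is j.-homog -> D <= j.
Proof.
move=> G_ge [s [Gs ->]] p_neq0 p_homog.
have [mm mm_supp] : exists mm, mm \in msupp (\sum_(x <- s) x.1 * x.2)%R.
  move: p_neq0; rewrite -msupp_eq0; case: (msupp _) => // mm ? _.
  by exists mm; rewrite mem_head.
rewrite -(dhomog_mf p_homog mm_supp) leqNgt; apply: contraL mm_supp => lt_mm_D.
rewrite mcoeff_msupp negbK raddf_sum /= big_seq big1 // => x xs.
apply/memN_msupp_eq0/negP => /msuppM_le /allpairsP[[m1 m2] [_ m2_supp mmE]].
have := G_ge _ (Gs _ xs) _ m2_supp.
by move: lt_mm_D; rewrite mmE /= mdegD; lia.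
Qed.

Definition mnm_of_set n (s : {set 'I_n}) : 'X_{1..n} := (\sum_(i in s) U_(i))%MM.

Lemma mdeg_mnm_of_set n (s : {set 'I_n}) : mdeg (mnm_of_set s) = #|s|.
Proof. by rewrite mdeg_sum -sum1_card; apply: eq_bigr => i _; rewrite mdeg1. Qed.

Lemma prod_mpolyX_set (R : comNzRingType) n (s : {set 'I_n}) :
  (\prod_(i in s) 'X_i)%R = 'X_[mnm_of_set s] :> {mpoly R[n]}.
Proof. by rewrite (big_morph _ (@mpolyXD n R) (@mpolyX0 n R)). Qed.

Lemma SR_initial_degree_nonface (R : comNzRingType) n (Delta : {set {set 'I_n}}) k :
  initial_degree (@SR_ideal R n Delta) k ->
  (forall s, s \notin Delta -> k <= #|s|) /\ exists2 s, s \notin Delta & #|s| = k.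
Proof.
move=> [[p [SRp p_neq0 p_homog]] deg_ge].
have nonface_ge s : s \notin Delta -> k <= #|s|.
  move=> sD; rewrite -mdeg_mnm_of_set; apply: (deg_ge 'X_[mnm_of_set s]).
  - by apply: ideal_gen_mem; exists s; rewrite prod_mpolyX_set.
  - by rewrite -msupp_eq0 msuppX.
  - by rewrite dhomogX.
split=> //; have [s /andP[sD card_s] | big_nonfaces] :=
  pickP (fun s : {set 'I_n} => (s \notin Delta) && (#|s| <= k)).
  by exists s => //; apply/eqP; rewrite eqn_leq card_s nonface_ge.
suff : k < k by rewrite ltnn.
apply: (ideal_gen_homog_ge _ SRp p_neq0 p_homog) => _ [s [sD ->]] mm.
rewrite prod_mpolyX_set msuppX inE => /eqP ->.
by rewrite mdeg_mnm_of_set ltnNge; move: (big_nonfaces s) => /= /negbT; rewrite sD.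
Qed.

Section ToricBinomials.
Variables (R : comNzRingType) (n : nat) (Delta : {set {set 'I_n}}) (d : 'I_n -> nat).
Implicit Types (u v : {ffun cell d -> nat}).

Definition cell_mnm u : 'X_{1..#|{: cell d}|} := (\sum_c U_(enum_rank c) *+ u c)%MM.

Lemma pmonomE u : pmonom R u = 'X_[cell_mnm u].
Proof. exact: mprodXnE. Qed.

Lemma mdeg_cell_mnm u : mdeg (cell_mnm u) = \sum_c u c.
Proof. by rewrite mdeg_sum; apply: eq_bigr => c _; rewrite mdegMn mdeg1 mul1n. Qed.

Lemma cell_mnm_inj : injective cell_mnm.
Proof.
move=> u v E; apply/ffunP => c.
have coord w : cell_mnm w (enum_rank c) = w c.
  rewrite mnm_sumE (bigD1 c) //= big1 ?addn0 => [|c' c'c].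
    by rewrite mulmnE mnm1E eqxx mul1n.
  by rewrite mulmnE mnm1E (inj_eq enum_rank_inj) (negbTE c'c).
by rewrite -!coord E.
Qed.

Lemma toric_ideal_homog_ge t p j :
  (forall T : {set 'I_n}, #|T| <= t -> T \in Delta) ->
  @toric_ideal R n Delta d p -> p != 0%R -> p \is j.-homog -> 2 ^ t <= j.
Proof.
move=> small_faces; apply: ideal_gen_homog_ge => _ [u [v [fib ->]]] mm.
have [->|neq] := eqVneq u v; first by rewrite subrr msupp0.
rewrite !pmonomE => /msuppB_le; rewrite mem_cat !msuppX !inE.
case/orP => /eqP ->; rewrite mdeg_cell_mnm.
  by apply: (same_fiber_sum_ge small_faces fib neq).
have fib_sym : same_fiber Delta v u by move=> F facetF a0; rewrite fib.
by apply: (same_fiber_sum_ge small_faces fib_sym); rewrite eq_sym.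
Qed.

Lemma toric_ideal_parity_cube (d_ge2 : forall i, 1 < d i) (sigma : {set 'I_n}) :
  sigma != set0 -> (forall F, facet Delta F -> ~~ (sigma \subset F)) ->
  exists p, [/\ @toric_ideal R n Delta d p, p != 0%R & p \is (2 ^ (#|sigma| - 1)).-homog].
Proof.
move=> sigma_neq0 no_facet; pose cube b := parity_cube d sigma b.
exists (pmonom R (cube false) - pmonom R (cube true))%R; split.
- apply: ideal_gen_mem; exists (cube false), (cube true); split=> // F facetF a0.
  have /subsetPn[j js jF] := no_facet F facetF.
  exact: (Mmul_parity_cube d_ge2 a0 false js jF).
- have cube_neq : cube false != cube true.
    by apply/eqP => /ffunP /(_ (bit_cell d_ge2 set0)); rewrite !parity_cube_bit_cell0.
  rewrite !pmonomE subr_eq0; apply: contra_neq cube_neq.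
  move/(congr1 (mcoeff (cell_mnm (cube false)))).
  rewrite !mcoeffX eqxx (inj_eq cell_mnm_inj).
  by case: eqP => // _ /eqP; rewrite oner_eq0.
- rewrite !pmonomE; apply: rpredB; rewrite dhomogX; apply/eqP.
  all: exact: etrans (mdeg_cell_mnm _) (sum_parity_cube d_ge2 _ sigma_neq0).
Qed.

End ToricBinomials.

Theorem proposition4p2 (K : fieldType) (n : nat) (Delta : {set {set 'I_n}})
  (d : 'I_n -> nat) (k : nat) :
  simplicial_complex Delta ->
  ideal_nonzero (@SR_ideal K n Delta) ->
  initial_degree (@SR_ideal K n Delta) k ->
  (forall i, 2 <= d i)%N ->
  initial_degree (@toric_ideal K n Delta d) (2 ^ (k - 1))%N.
Proof.
move=> [Delta_neq0 Delta_closed] _ /SR_initial_degree_nonface.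
case=> nonface_ge [sigma sigmaD card_sigma] d_ge2.
have sigma_neq0 : sigma != set0.
  apply: contraNneq sigmaD => ->; case/set0Pn: Delta_neq0 => G GD.
  exact: Delta_closed GD (sub0set G).
have small_faces (T : {set 'I_n}) : #|T| <= k - 1 -> T \in Delta.
  have k_gt0 : 0 < k by rewrite -card_sigma card_gt0.
  by move=> cardT; apply: contraT => /nonface_ge; lia.
split; last by move=> p j; exact: toric_ideal_homog_ge small_faces.
rewrite -card_sigma; apply: (toric_ideal_parity_cube K d_ge2 sigma_neq0).
by move=> F [FD _]; apply: contraNN sigmaD; apply: Delta_closed FD.
Qed.
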